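(* Let $G$ be a connected graph with minimum degree $\delta\geq 2$ such that for every edge $v_iv_j\in E(G)$ we have $|d_i-d_j|\leq (2k-1)^{2}$, where $k=\min\{d_i,d_j\}$. Then $GA(G)>ABC(G)$.
   Context: All graphs are finite, simple and undirected; $d_i$ denotes the degree of vertex $v_i$. The first geometric-arithmetic index is $GA(G)=\sum_{v_iv_j\in E(G)}\frac{2\sqrt{d_id_j}}{d_i+d_j}$ and the atom-bond connectivity index is $ABC(G)=\sum_{v_iv_j\in E(G)}\sqrt{\frac{d_i+d_j-2}{d_id_j}}$. *)

From mathcomp Require Import all_boot all_order all_algebra.
Set Implicit Arguments. Unset Strict Implicit. Unset Printing Implicit Defensive.
Import Order.TTheory GRing.Theory Num.Theory.

Definition deg (n : nat) (e : rel 'I_n) (x : 'I_n) : nat := #|[set y | e x y]|.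

Definition simple_graph (n : nat) (e : rel 'I_n) : Prop :=
  symmetric e /\ irreflexive e.

Definition connected_graph (n : nat) (e : rel 'I_n) : Prop :=
  (0 < n)%N /\ forall x y : 'I_n, connect e x y.

Definition min_degree_ge (n : nat) (e : rel 'I_n) (m : nat) : Prop :=
  forall x : 'I_n, (m <= deg e x)%N.

Local Open Scope ring_scope.

(* Each unordered edge {v_i, v_j} is counted once, as the pair i < j. *)
Definition GA (R : rcfType) (n : nat) (e : rel 'I_n) : R :=
  \sum_(i < n) \sum_(j < n | (i < j)%N && e i j)
     (2 * Num.sqrt ((deg e i)%:R * (deg e j)%:R) / ((deg e i)%:R + (deg e j)%:R)).

Definition ABC (R : rcfType) (n : nat) (e : rel 'I_n) : R :=
  \sum_(i < n) \sum_(j < n | (i < j)%N && e i j)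
     Num.sqrt (((deg e i)%:R + (deg e j)%:R - 2) / ((deg e i)%:R * (deg e j)%:R)).

From mathcomp Require Import all_boot all_order all_algebra ring lra.
Import Order.TTheory GRing.Theory Num.Theory.
Local Open Scope ring_scope.

(* The comparison is made edge by edge.  For degrees x <= y, squaring shows
   that the ABC term of the edge is below its GA term exactly when
   (x + y - 2) (x + y)^2 < 4 (x y)^2.  Writing y = x + t, the difference of
   the two sides is
     4 x^2 (x^2 - 2x + 2) + (2x + 1) t + (t^2 + (2x - 1) t) ((2x - 1)^2 - t),
   which is positive for x >= 2 and 0 <= t <= (2x - 1)^2.  Summing over the
   edges, of which there is at least one, gives the strict inequality. *)

Section EdgeWeights.
Variable R : rcfType.

Definition ga_weight (x y : R) : R := 2 * Num.sqrt (x * y) / (x + y).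

Definition abc_weight (x y : R) : R := Num.sqrt ((x + y - 2) / (x * y)).

Lemma abc_weight_lt_ga_weight (x y : R) : 0 < x -> 0 < y ->
  (x + y - 2) * (x + y) ^+ 2 < 4 * (x * y) ^+ 2 ->
  abc_weight x y < ga_weight x y.
Proof.
move=> x_gt0 y_gt0 ineq.
have xy_gt0 : 0 < x * y by apply: mulr_gt0.
have ga_gt0 : 0 < ga_weight x y.
  by rewrite divr_gt0 ?addr_gt0 // mulr_gt0 // sqrtr_gt0.
rewrite -(ger0_norm (ltW ga_gt0)) -sqrtr_sqr ltr_sqrt ?exprn_gt0 //.
have -> : ga_weight x y ^+ 2 = 4 * (x * y) / (x + y) ^+ 2.
  by rewrite expr_div_n exprMn sqr_sqrtr ?ltW //; congr (_ * _ / _); ring.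
rewrite ltr_pdivlMr ?exprn_gt0 ?addr_gt0 // mulrAC ltr_pdivrMr //.
by rewrite -mulrA -expr2.
Qed.

Lemma degree_ineq_shift (x t : R) : 2 <= x -> 0 <= t -> t <= (2 * x - 1) ^+ 2 ->
  (x + (x + t) - 2) * (x + (x + t)) ^+ 2 < 4 * (x * (x + t)) ^+ 2.
Proof.
move=> x_ge2 t_ge0 t_le; rewrite -subr_gt0.
have -> : 4 * (x * (x + t)) ^+ 2 - (x + (x + t) - 2) * (x + (x + t)) ^+ 2 =
  4 * x * x * (x * x - 2 * x + 2) + (2 * x + 1) * t
  + (t * t + (2 * x - 1) * t) * ((2 * x - 1) ^+ 2 - t) by ring.
have slack_ge0 : 0 <= (2 * x - 1) ^+ 2 - t by rewrite subr_ge0.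
apply: ltr_wpDr; first by apply: mulr_ge0 => //; apply: addr_ge0; nra.
apply: ltr_wpDr; first by apply: mulr_ge0 => //; lra.
by apply: mulr_gt0; nra.
Qed.

Lemma abc_weight_lt_ga_weight_nat (a b : nat) : (2 <= a)%N -> (2 <= b)%N ->
  (maxn a b - minn a b <= (2 * minn a b - 1) ^ 2)%N ->
  abc_weight a%:R b%:R < ga_weight a%:R b%:R.
Proof.
move=> a_ge2 b_ge2 gap; apply: abc_weight_lt_ga_weight; rewrite ?ltr0n ?(ltnW a_ge2) ?(ltnW b_ge2) //.
wlog le_ab : a b a_ge2 b_ge2 gap / (a <= b)%N => [sym | ].
  have [le_ab | /ltnW le_ba] := leqP a b; first exact: sym.
  rewrite (addrC a%:R) (mulrC a%:R); apply: sym => //.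
  by rewrite maxnC minnC.
move: gap; rewrite (maxn_idPr le_ab) (minn_idPl le_ab) => gap.
have -> : b%:R = a%:R + (b - a)%:R :> R by rewrite -natrD subnKC.
apply: degree_ineq_shift; rewrite ?ler0n ?(ler_nat R 2) //.
have twice_a_ge1 : (1 <= 2 * a)%N by rewrite muln_gt0 (leq_trans _ a_ge2).
by move: gap; rewrite -(ler_nat R) natrX natrB // natrB // natrM.
Qed.

End EdgeWeights.

Lemma ltr_sum_sum (R : numDomainType) (I J : finType) (P : I -> J -> bool)
    (F G : I -> J -> R) :
  (exists i j, P i j) -> (forall i j, P i j -> F i j < G i j) ->
  \sum_i \sum_(j | P i j) F i j < \sum_i \sum_(j | P i j) G i j.
Proof.
move=> [i0 [j0 Pij0]] FG; rewrite !pair_big_dep /=.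
apply: ltr_sum => [|[i j] /FG //].
by apply/hasP; exists (i0, j0); rewrite ?mem_index_enum.
Qed.

Lemma exists_edge_lt (n : nat) (e : rel 'I_n) :
  simple_graph e -> (0 < n)%N -> min_degree_ge e 1 ->
  exists i j : 'I_n, (i < j)%N && e i j.
Proof.
move=> [e_sym e_irr] n_gt0 deg_ge1.
pose x := Ordinal n_gt0.
have /card_gt0P[y] : (0 < deg e x)%N by apply: deg_ge1.
rewrite inE => exy.
have : x != y by apply: contraTneq exy => <-; rewrite e_irr.
rewrite -val_eqE neq_ltn => /orP[lt_xy | lt_yx].
  by exists x, y; rewrite lt_xy exy.
by exists y, x; rewrite lt_yx e_sym.
Qed.

(* Connectivity is used only to know that the graph has a vertex. *)
Theorem theorem3p6 (R : rcfType) (n : nat) (e : rel 'I_n) :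
  simple_graph e ->
  connected_graph e ->
  min_degree_ge e 2 ->
  (forall i j : 'I_n, e i j ->
     let k := minn (deg e i) (deg e j) in
     (maxn (deg e i) (deg e j) - k <= (2 * k - 1) ^ 2)%N) ->
  (ABC R e < GA R e)%R.
Proof.
move=> simple [n_gt0 _] deg_ge2 gap.
have deg_ge1 : min_degree_ge e 1 by move=> x; apply: leq_trans (deg_ge2 x).
apply: ltr_sum_sum; first exact: exists_edge_lt.
move=> i j /andP[_ eij].
exact: abc_weight_lt_ga_weight_nat (deg_ge2 i) (deg_ge2 j) (gap i j eij).
Qed.
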